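(* For any $L\in\mathbb{N}$ there exists a ReLU network $\phi:\mathbb{R}^2\to\mathbb{R}$, $\phi\in\mathcal{NN}(8,2L)$, such that $\phi(x,l)=x_l$ whenever $x=\sum_{j=1}^Lx_j2^{-j}$ with $x_j\in\{0,1\}$ and $l\in\{1,2,\dots,L\}$. Furthermore, $|\phi(x,l)-\phi(x',l')|\le2\cdot2^{L^2}|x-x'|+L|l-l'|$ for all $x,x',l,l'\in\mathbb{R}$.
   Context: $\sigma(x)=\max(x,0)$. $\mathcal{NN}(W,L)$: functions $\phi(x)=T_L(\sigma(T_{L-1}(\cdots\sigma(T_0(x))\cdots)))$ with affine maps $T_l$, ReLU componentwise, all hidden layer sizes $\le W$ and depth $\le L$. *)

From mathcomp Require Import all_boot all_order all_algebra.
From mathcomp Require Import reals.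
Set Implicit Arguments. Unset Strict Implicit. Unset Printing Implicit Defensive.
Import Order.TTheory GRing.Theory Num.Theory.
Local Open Scope ring_scope.

Definition relu {R : realType} (x : R) : R := Num.max x 0.
Definition relu_vec {R : realType} {n : nat} (v : 'rV[R]_n) : 'rV[R]_n :=
  map_mx relu v.

(* hidden R d W k n g : g : R^d -> R^n is the output of the k-th hidden layer
   of a ReLU network with input dimension d, i.e.
   g = sigma o T_{k-1} o sigma o ... o sigma o T_0, where every hidden layer
   size is <= W. *)
Local Unset Implicit Arguments.
Inductive hidden {R : realType} (d W : nat) :
  forall (k n : nat), ('rV[R]_d -> 'rV[R]_n) -> Prop :=
| hidden0 : hidden d W 0%N d id
| hiddenS : forall (k m n : nat) (g : 'rV[R]_d -> 'rV[R]_m)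
              (A : 'M[R]_(m, n)) (b : 'rV[R]_n),
    hidden d W k m g -> (n <= W)%N ->
    hidden d W k.+1 n (fun x => relu_vec (g x *m A + b)).

Definition NN {R : realType} (d W L : nat) (phi : 'rV[R]_d -> R) : Prop :=
  exists (K m : nat) (g : 'rV[R]_d -> 'rV[R]_m) (A : 'cV[R]_m) (b : R),
    (K <= L)%N /\ hidden d W K m g /\ forall x, phi x = (g x *m A) 0 0 + b.

Local Set Implicit Arguments.
Definition vec2 {R : realType} (x y : R) : 'rV[R]_2 :=
  \row_(i < 2) (if i == ord0 then x else y).

From mathcomp Require Import all_boot all_order all_algebra.
From mathcomp Require Import reals.
From mathcomp Require Import lra ring zify.
From Stdlib Require Import FunctionalExtensionality.
Import Order.TTheory GRing.Theory Num.Theory.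
Local Open Scope ring_scope.

(* The digits of x = sum_j x_j 2^-j are read off by the doubling map
   y |-> 2 y - x_(k+1), where the floor-like digit x_(k+1) is computed exactly by
   the two-ReLU ramp t |-> clamp(t + 1, 0, 1) at t = 2^L (y - 1/2): on such dyadic
   inputs y - 1/2 is either >= 0 or <= -2^(-(L-k)).  The digit of index l is then
   selected as the sum over k of relu(digit_k - |l - k|).  Every doubling step is
   2^L-Lipschitz, so the k-th digit is 2^(L(k+1))-Lipschitz in x and the sum over
   k < L stays below 2 * 2^(L^2).  One doubling step costs two hidden layers of
   widths 7 and 6, which carry y, l, and the partial sum through the network. *)

Section ReluCalculus.

Context {R : realType}.
Implicit Types s t : R.

Lemma relu_id t : 0 <= t -> relu t = t.
Proof. by rewrite /relu => ?; rewrite max_l. Qed.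

Lemma relu_eq0 t : t <= 0 -> relu t = 0.
Proof. by rewrite /relu => ?; rewrite max_r. Qed.

Lemma relu_ge0 t : 0 <= relu t.
Proof. by rewrite /relu le_max lexx orbT. Qed.

Lemma relu_relu t : relu (relu t) = relu t.
Proof. exact/relu_id/relu_ge0. Qed.

Ltac case_relu :=
  repeat match goal with |- context [@relu _ ?u] =>
    lazymatch u with context [relu _] => fail | _ =>
      let h := fresh "h" in
      have [h|h] := lerP 0 u; [rewrite (relu_id _ h) | rewrite (relu_eq0 _ (ltW h))]
    end end.

Ltac case_norm :=
  repeat match goal with |- context [@Num.norm _ _ ?u] =>
    let h := fresh "h" in
    have [h|h] := lerP 0 u; [rewrite (ger0_norm h) | rewrite (ltr0_norm h)] end.

Lemma reluBreluN t : relu t - relu (- t) = t.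
Proof. case_relu; lra. Qed.

Lemma reluDreluN t : relu t + relu (- t) = `|t|.
Proof. case_relu; case_norm; lra. Qed.

Lemma relu_lip s t : `|relu s - relu t| <= `|s - t|.
Proof. case_relu; case_norm; lra. Qed.

Definition ramp t : R := relu (t + 1) - relu t.

Lemma ramp_eq1 t : 0 <= t -> ramp t = 1.
Proof. by move=> ?; rewrite /ramp !relu_id ?addrKA; lra. Qed.

Lemma ramp_eq0 t : t <= -1 -> ramp t = 0.
Proof. by move=> ?; rewrite /ramp !relu_eq0 ?subrr; lra. Qed.

Lemma ramp_incr s t : s <= t -> 0 <= ramp t - ramp s <= t - s.
Proof. by rewrite /ramp => st; apply/andP; split; case_relu; lra. Qed.

Lemma ramp_lip s t : `|ramp s - ramp t| <= `|s - t|.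
Proof.
wlog st : s t / s <= t => [hw|].
  case/orP: (le_total s t) => [/hw // | ts].
  by rewrite distrC [X in _ <= X]distrC hw.
have /andP[h0 h1] := ramp_incr _ _ st.
by rewrite distrC [`|s - t|]distrC !ger0_norm //; lra.
Qed.

End ReluCalculus.

Section DigitExtraction.

Context {R : realType}.
Variable c : R.

Fixpoint shifted (k : nat) (x : R) : R :=
  if k is k'.+1 then 2 * shifted k' x - ramp (c * (shifted k' x - 2^-1)) else x.

Definition digit k x := ramp (c * (shifted k x - 2^-1)).

Lemma shifted0 x : shifted 0 x = x.
Proof. by []. Qed.

Lemma shiftedS k x : shifted k.+1 x = 2 * shifted k x - digit k x.
Proof. by []. Qed.

Definition select_digit k x l :=
  relu (digit k x - relu (l - k.+1%:R) - relu (k.+1%:R - l)).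

Fixpoint select_sum k x l : R :=
  if k is k'.+1 then select_sum k' x l + select_digit k' x l else 0.

Lemma select_digitE k x l :
  select_digit k x l = relu (digit k x - `|l - k.+1%:R|).
Proof. by rewrite /select_digit -addrA -opprD -[k.+1%:R - l]opprB reluDreluN. Qed.

Lemma select_sum_ge0 k x l : 0 <= select_sum k x l.
Proof. by elim: k => //= k IH; rewrite addr_ge0 ?relu_ge0. Qed.

Hypothesis c_ge2 : 2 <= c.

Let c_ge0 : 0 <= c. Proof. exact: le_trans c_ge2. Qed.

Lemma shift_step_lip y y' :
  `|(2 * y - ramp (c * (y - 2^-1))) - (2 * y' - ramp (c * (y' - 2^-1)))|
    <= c * `|y - y'|.
Proof.
wlog yy' : y y' / y <= y' => [hw|].
  case/orP: (le_total y y') => [/hw // | y'y].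
  by rewrite distrC [`|y - y'|]distrC hw.
have /andP[h0 h1] : 0 <= ramp (c * (y' - 2^-1)) - ramp (c * (y - 2^-1)) <= c * (y' - y).
  rewrite (_ : c * (y' - y) = c * (y' - 2^-1) - c * (y - 2^-1)); last by ring.
  by apply: ramp_incr; rewrite ler_wpM2l ?lerD.
have h2 : 0 <= (c - 2) * (y' - y) by rewrite mulr_ge0 // subr_ge0.
rewrite [`|y - y'|]distrC (ger0_norm (_ : 0 <= y' - y)) ?subr_ge0 //.
by rewrite ler_norml; apply/andP; split; lra.
Qed.

Lemma shifted_lip k x x' : `|shifted k x - shifted k x'| <= c ^+ k * `|x - x'|.
Proof.
elim: k => [|k IH]; first by rewrite expr0 mul1r.
apply: le_trans (shift_step_lip _ _) _.
by rewrite exprS -mulrA ler_wpM2l.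
Qed.

Lemma digit_lip k x x' : `|digit k x - digit k x'| <= c ^+ k.+1 * `|x - x'|.
Proof.
apply: le_trans (ramp_lip _ _) _.
rewrite -mulrBr opprB addrA subrK normrM exprS -mulrA ger0_norm //.
by rewrite ler_wpM2l ?shifted_lip.
Qed.

Lemma select_digit_lip k x x' l l' :
  `|select_digit k x l - select_digit k x' l'|
    <= c ^+ k.+1 * `|x - x'| + `|l - l'|.
Proof.
rewrite !select_digitE; apply: le_trans (relu_lip _ _) _.
set K := k.+1%:R.
have -> : digit k x - `|l - K| - (digit k x' - `|l' - K|)
          = (digit k x - digit k x') - (`|l - K| - `|l' - K|) by ring.
apply: le_trans (ler_normB _ _) _; rewrite lerD ?digit_lip //.
by apply: le_trans (ler_dist_dist _ _) _; rewrite opprB addrA subrK.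
Qed.

(* The bound 2 c^k on c + ... + c^k survives the next term because c >= 2:
   2 c^k + c^(k+1) <= 2 c^(k+1). *)
Lemma select_sum_lip k x x' l l' :
  `|select_sum k x l - select_sum k x' l'|
    <= 2 * c ^+ k * `|x - x'| + k%:R * `|l - l'|.
Proof.
elim: k => [|k IH] /=.
  by rewrite subrr normr0 mul0r addr0 mulr_ge0 ?normr_ge0 // expr0 mulr1.
rewrite opprD addrACA; apply: le_trans (ler_normD _ _) _.
apply: le_trans (lerD IH (select_digit_lip _ _ _ _ _)) _.
have : 0 <= (c - 2) * (c ^+ k * `|x - x'|).
  by rewrite !mulr_ge0 ?exprn_ge0 // subr_ge0.
rewrite -[k.+1%:R]natr1 exprS; lra.
Qed.

End DigitExtraction.

Arguments shifted : simpl never.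

Section BinaryExpansion.

Context {R : realType}.
Variables (L : nat) (xs : nat -> bool).

Definition bin_tail k : R := \sum_(k.+1 <= j < L.+1) (xs j)%:R / 2 ^+ (j - k).

Lemma bin_tail_ge0 k : 0 <= bin_tail k.
Proof. by apply: sumr_ge0 => j _; rewrite divr_ge0 ?exprn_ge0. Qed.

Lemma bin_tailS k : (k < L)%N ->
  bin_tail k = (xs k.+1)%:R / 2 + bin_tail k.+1 / 2.
Proof.
move=> kL; rewrite /bin_tail big_ltn ?ltnS // subSnn expr1; congr (_ + _).
rewrite mulr_suml; apply: eq_big_nat => j /andP[kj _].
by rewrite (_ : (j - k = (j - k.+1).+1)%N) ?exprSr ?invfM ?mulrA //; lia.
Qed.

Lemma bin_tail_gap k : (k <= L)%N -> 1 <= 2 ^+ (L - k) * (1 - bin_tail k).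
Proof.
move=> /subnKC; move: (L - k)%N => d; elim: d k => [|d IH] k kdL.
  by rewrite /bin_tail -kdL addn0 big_geq // subr0 expr0 mul1r.
have := IH k.+1 (etrans (addSnnS k d) kdL).
rewrite [bin_tail k]bin_tailS; last lia.
have hd : 0 <= 2 ^+ d :> R by rewrite exprn_ge0.
have hb : (xs k.+1)%:R <= 1 :> R by case: (xs k.+1); rewrite ?ler01.
rewrite exprS; nra.
Qed.

Lemma digit_bin_tail k : (k < L)%N ->
  ramp (2 ^+ L * (bin_tail k - 2^-1)) = (xs k.+1)%:R.
Proof.
move=> kL; rewrite bin_tailS //.
have hT := bin_tail_ge0 k.+1; have hL : 0 <= 2 ^+ L :> R by rewrite exprn_ge0.
case: (xs k.+1) => /=.
  by rewrite ramp_eq1 // mulr_ge0 //; lra.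
rewrite ramp_eq0 //.
have -> : (2 : R) ^+ L = 2 ^+ k * 2 * 2 ^+ (L - k.+1).
  by rewrite -exprSr -exprD; congr (_ ^+ _); lia.
have := bin_tail_gap _ kL; have := exprn_ege1 k (ler1n R 2).
set p := 2 ^+ (L - k.+1); set q := 2 ^+ k; set t := bin_tail k.+1 => hq hgap.
have -> : q * 2 * p * (0 / 2 + t / 2 - 2^-1) = - (q * (p * (1 - t))) by field.
have hpt := le_trans ler01 hgap.
by rewrite lerN2 (le_trans hgap) // ler_peMl.
Qed.

Lemma shifted_bin_tail k : (k <= L)%N -> shifted (2 ^+ L) k (bin_tail 0) = bin_tail k.
Proof.
elim: k => [|k IH] kL //.
rewrite shiftedS /digit IH ?(ltnW kL) // digit_bin_tail //.
by rewrite [bin_tail k]bin_tailS //; field.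
Qed.

Lemma select_digit_bin_tail k l : (k < L)%N ->
  select_digit (2 ^+ L) k (bin_tail 0) l%:R = if l == k.+1 then (xs l)%:R else 0.
Proof.
move=> kL; rewrite select_digitE /digit shifted_bin_tail ?(ltnW kL) //.
rewrite digit_bin_tail //.
have [-> | lk] := eqVneq l k.+1; first by rewrite subrr normr0 subr0 relu_id.
have hb : (xs k.+1)%:R <= 1 :> R by case: (xs k.+1); rewrite ?ler01.
have : 1 <= `|l%:R - k.+1%:R| :> R.
  by rewrite ler_normr opprB !lerBrDl !natr1 !ler_nat; apply/orP; lia.
by move=> h; rewrite relu_eq0 //; lra.
Qed.

Lemma select_sum_bin_tail k l : (k <= L)%N -> (1 <= l)%N ->
  select_sum (2 ^+ L) k (bin_tail 0) l%:R = if (l <= k)%N then (xs l)%:R else 0.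
Proof.
move=> + l1; elim: k => [|k IH] kL /=; first by rewrite leqNgt l1.
rewrite IH ?(ltnW kL) // select_digit_bin_tail //.
have [lk | kl] := leqP l k; first by rewrite (@ltn_eqF l k.+1) ?(leqW lk) ?addr0.
rewrite add0r; case: eqP => [-> | /eqP ne]; first by rewrite leqnn.
by rewrite ifN // -ltnNge ltn_neqAle eq_sym ne kl.
Qed.

End BinaryExpansion.

Section Network.

Context {R : realType}.
Variable c : R.

Lemma hidden_layer {d W k m n} {g : 'rV[R]_d -> 'rV[R]_m} {F G : 'rV[R]_d -> nat -> R}
    {w : nat -> nat -> R} {b : nat -> R} :
  hidden d W k m g -> (forall v, g v = \row_(i < m) F v i) -> (n <= W)%N ->
  (forall v (j : 'I_n), G v j = relu (\sum_(i < m) F v i * w i j + b j)) ->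
  hidden d W k.+1 n (fun v => \row_(j < n) G v j).
Proof.
move=> hg gE nW GE.
have -> : (fun v => \row_(j < n) G v j) =
    (fun v => relu_vec (g v *m \matrix_(i < m, j < n) w i j + \row_(j < n) b j)).
  apply: functional_extensionality => v; apply/rowP => j.
  rewrite /relu_vec !mxE GE; congr (relu (_ + _)).
  by apply: eq_bigr => i _; rewrite gE !mxE.
exact: hiddenS.
Qed.

Definition in_x (v : 'rV[R]_2) := v ord0 ord0.
Definition in_l (v : 'rV[R]_2) := v ord0 (lift ord0 ord0).

(* A signed quantity a is
   carried by the pair relu a, relu (- a), from which the next layer reads
   a = relu a - relu (- a); the ramp is split into its halves relu (t + 1), relu t. *)
Definition wide_units k (v : 'rV[R]_2) (i : nat) : R :=
  let y := shifted c k (in_x v) in let l := in_l v in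
  match i with
  | 0%N => relu (c * (y - 2^-1) + 1) | 1%N => relu (c * (y - 2^-1))
  | 2%N => relu y | 3%N => relu (- y)
  | 4%N => relu (l - k.+1%:R) | 5%N => relu (k.+1%:R - l)
  | _ => select_sum c k (in_x v) l end.

Definition narrow_units k (v : 'rV[R]_2) (i : nat) : R :=
  let y := shifted c k.+1 (in_x v) in let l := in_l v in
  match i with
  | 0%N => relu y | 1%N => relu (- y)
  | 2%N => relu (l - k.+1%:R) | 3%N => relu (k.+1%:R - l)
  | 4%N => select_sum c k (in_x v) l | _ => select_digit c k (in_x v) l end.

Definition w_input (i j : nat) : R :=
  match i, j with
  | 0%N, 0%N => c | 0%N, 1%N => c | 0%N, 2%N => 1 | 0%N, 3%N => -1
  | 1%N, 4%N => 1 | 1%N, 5%N => -1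
  | _, _ => 0 end.

Definition w_narrow (i j : nat) : R :=
  match i, j with
  | 0%N, 0%N => -1 | 1%N, 0%N => 1 | 2%N, 0%N => 2 | 3%N, 0%N => -2
  | 0%N, 1%N => 1 | 1%N, 1%N => -1 | 2%N, 1%N => -2 | 3%N, 1%N => 2
  | 4%N, 2%N => 1 | 5%N, 3%N => 1 | 6%N, 4%N => 1
  | 0%N, 5%N => 1 | 1%N, 5%N => -1 | 4%N, 5%N => -1 | 5%N, 5%N => -1
  | _, _ => 0 end.

Definition w_wide (i j : nat) : R :=
  match i, j with
  | 0%N, 0%N => c | 1%N, 0%N => - c | 0%N, 1%N => c | 1%N, 1%N => - c
  | 0%N, 2%N => 1 | 1%N, 2%N => -1 | 0%N, 3%N => -1 | 1%N, 3%N => 1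
  | 2%N, 4%N => 1 | 3%N, 4%N => -1 | 2%N, 5%N => -1 | 3%N, 5%N => 1
  | 4%N, 6%N => 1 | 5%N, 6%N => 1
  | _, _ => 0 end.

Definition b_wide (j : nat) : R :=
  match j with 0%N => 1 - c / 2 | 1%N => - (c / 2) | 4%N => -1 | 5%N => 1 | _ => 0 end.

Ltac expand_sum := rewrite !big_ord_recl big_ord0 /bump /= ?add1n.

Lemma hidden_first_wide : hidden 2 8 1 7 (fun v => \row_(j < 7) wide_units 0 v j).
Proof.
apply: (hidden_layer (F := fun v i => if i is 0%N then in_x v else in_l v)
  (w := w_input) (b := b_wide) (hidden0 _ _)) => [v | // | v j].
  by apply/rowP => -[[|[|i]] hi] //; rewrite !mxE /in_x /in_l /=; f_equal; apply: val_inj.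
expand_sum; case: j => [[|[|[|[|[|[|[|j]]]]]]] hj] //=;
  rewrite ?shifted0 ?mulr0 ?mulr1 ?addr0 ?relu_relu //;
  first [by rewrite relu_eq0 | by congr relu; field].
Qed.

Lemma hidden_narrow {k d} {g : 'rV[R]_2 -> 'rV[R]_7} :
  hidden 2 8 d 7 g -> (forall v, g v = \row_(i < 7) wide_units k v i) ->
  hidden 2 8 d.+1 6 (fun v => \row_(j < 6) narrow_units k v j).
Proof.
move=> hg gE; apply: (hidden_layer (w := w_narrow) (b := fun=> 0) hg gE) => [// | v j].
have hy := reluBreluN (shifted c k (in_x v)).
expand_sum; case: j => [[|[|[|[|[|[|j]]]]]] hj] //=;
  rewrite ?mulr0 ?mulr1 ?addr0 ?add0r ?relu_relu //.
- by congr relu; rewrite shiftedS /digit /ramp; lra.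
- by congr relu; rewrite shiftedS /digit /ramp; lra.
- by rewrite relu_id ?select_sum_ge0.
- by rewrite /select_digit /digit /ramp; congr relu; lra.
Qed.

Lemma hidden_wide {k d} {g : 'rV[R]_2 -> 'rV[R]_6} :
  hidden 2 8 d 6 g -> (forall v, g v = \row_(i < 6) narrow_units k v i) ->
  hidden 2 8 d.+1 7 (fun v => \row_(j < 7) wide_units k.+1 v j).
Proof.
move=> hg gE; apply: (hidden_layer (w := w_wide) (b := b_wide) hg gE) => [// | v j].
have hy := reluBreluN (shifted c k.+1 (in_x v)).
have hcy : relu (shifted c k.+1 (in_x v)) * c + relu (- shifted c k.+1 (in_x v)) * - c
           = shifted c k.+1 (in_x v) * c by rewrite mulrN -mulrBl hy.
have hl := reluBreluN (in_l v - k.+1%:R); rewrite opprB in hl.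
have k2 : (k.+2%:R : R) = k.+1%:R + 1 by rewrite -natr1.
expand_sum; case: j => [[|[|[|[|[|[|[|j]]]]]]] hj] //;
  rewrite /= ?mulr0 ?mulr1 ?addr0 ?add0r ?relu_relu ?k2 //; try by congr relu; lra.
by rewrite relu_id // addr_ge0 ?select_sum_ge0 ?relu_ge0.
Qed.

Lemma hidden_narrow_chain k : exists g : 'rV[R]_2 -> 'rV[R]_6,
  hidden 2 8 k.*2.+2 6 g /\ forall v, g v = \row_(i < 6) narrow_units k v i.
Proof.
elim: k => [|k [g [hg gE]]]; eexists; split=> //.
  exact: hidden_narrow hidden_first_wide _.
by rewrite doubleS; apply: hidden_narrow (hidden_wide hg gE) _.
Qed.

Lemma select_sum_NN L : NN 2 8 (2 * L) (fun v => select_sum c L (in_x v) (in_l v)).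
Proof.
case: L => [|k].
  exists 0%N, 2%N, id, 0, 0; split => //; split; first exact: hidden0.
  by move=> v; rewrite mulmx0 mxE addr0.
have [g [hg gE]] := hidden_narrow_chain k.
exists k.*2.+2, 6%N, g, (\col_(i < 6) if (4 <= i)%N then 1 else 0), 0.
split; first lia.
by split=> // v; rewrite gE mxE; expand_sum; rewrite !mxE /=; lra.
Qed.

End Network.

Lemma select_sum_pow2_lip (R : realType) L (x x' l l' : R) :
  `|select_sum (2 ^+ L) L x l - select_sum (2 ^+ L) L x' l'|
    <= 2 * 2 ^+ (L ^ 2) * `|x - x'| + L%:R * `|l - l'|.
Proof.
case: L => [|k].
  by rewrite subrr normr0 mul0r addr0 mulr_ge0 ?normr_ge0 // mulr_ge0 ?exprn_ge0.
rewrite -mulnn exprM; apply: select_sum_lip.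
by rewrite exprS ler_peMr ?exprn_ege1 //; lra.
Qed.

Theorem lemma29 (R : realType) (L : nat) :
  exists phi : 'rV[R]_2 -> R,
    NN 2 8 (2 * L) phi /\
    (forall (xs : nat -> bool) (l : nat), (1 <= l <= L)%N ->
       phi (vec2 (\sum_(1 <= j < L.+1) (xs j)%:R / 2 ^+ j) l%:R) = (xs l)%:R) /\
    (forall x x' l l' : R,
       `|phi (vec2 x l) - phi (vec2 x' l')|
         <= 2 * 2 ^+ (L ^ 2) * `|x - x'| + L%:R * `|l - l'|).
Proof.
have in_xE (x l : R) : in_x (vec2 x l) = x by rewrite /in_x mxE.
have in_lE (x l : R) : in_l (vec2 x l) = l by rewrite /in_l mxE.
exists (fun v => select_sum (2 ^+ L) L (in_x v) (in_l v)).
split; first exact: select_sum_NN.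
split=> [xs l /andP[l1 lL] | x x' l l']; rewrite !in_xE !in_lE; last first.
  exact: select_sum_pow2_lip.
have -> : \sum_(1 <= j < L.+1) (xs j)%:R / 2 ^+ j = bin_tail L xs 0 :> R.
  by apply: eq_bigr => j _; rewrite subn0.
by rewrite select_sum_bin_tail ?lL.
Qed.
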